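(* Let $G$ be a simple connected graph. Then $\gamma(G)\le 2$ (i.e. $G\in\Gamma_{\le 2}$) if and only if $G$ is an induced subgraph of $K_{m,n,o}$ or of $T_n\vee(K_m+K_o)$ for some non-negative integers $m,n,o$.
   Context: For a finite graph $G$ and indeterminates $X_G=\{x_u : u\in V(G)\}$, the generalized Laplacian matrix $L(G,X_G)$ is the $V(G)\times V(G)$ matrix over $\mathbb{Z}[X_G]$ with $(u,u)$-entry $x_u$ and $(u,v)$-entry $-m_{uv}$ for $u\ne v$, $m_{uv}$ being the number of edges between $u$ and $v$. The $i$-th critical ideal $I_i(G,X_G)$ is the ideal of $\mathbb{Z}[X_G]$ generated by all $i\times i$ minors of $L(G,X_G)$ (with $I_i=\langle1\rangle$ for $i<1$, $I_i=\langle 0\rangle$ for $i>|V(G)|$). The algebraic co-rank $\gamma(G)$ is the number of critical ideals of $G$ equal to $\langle 1\rangle$; $\Gamma_{\le 2}$ is the set of simple connected graphs with $\gamma\le 2$. $K_{m,n,o}$ is the complete tripartite graph with parts of sizes $m,n,o$; $T_n$ is the edgeless graph on $n$ vertices; $K_m$ the complete graph on $m$ vertices; $G+H$ is the disjoint union and $G\vee H$ the join (disjoint union plus all edges between $G$ and $H$). *)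

From Stdlib Require Import ClassicalEpsilon.
From HB Require Import structures.
From mathcomp Require Import all_boot all_order all_algebra.
From mathcomp Require Import mpoly.
Set Implicit Arguments. Unset Strict Implicit. Unset Printing Implicit Defensive.
Import GRing.Theory.
Local Open Scope ring_scope.

Definition propb (P : Prop) : bool :=
  if excluded_middle_informative P then true else false.

Definition simple_graph (T : finType) (e : rel T) : Prop :=
  ssrbool.symmetric e /\ ssrbool.irreflexive e.

Definition connected_graph (T : finType) (e : rel T) : Prop :=
  forall u v : T, connect e u v.

Definition gen_laplacian (N : nat) (e : rel 'I_N) : 'M[{mpoly int[N]}]_N :=
  \matrix_(u, v) (if u == v then 'X_u else - ((e u v : nat)%:R)).

Definition minor (N i : nat) (A : 'M[{mpoly int[N]}]_N)
  (f g : {ffun 'I_i -> 'I_N}) : {mpoly int[N]} :=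
  \det (\matrix_(a, b) A (f a) (g b)).

Definition critical_ideal_trivial (N : nat) (e : rel 'I_N) (i : nat) : Prop :=
  exists c : {ffun {ffun 'I_i -> 'I_N} * {ffun 'I_i -> 'I_N} -> {mpoly int[N]}},
    1 = \sum_(p : {ffun 'I_i -> 'I_N} * {ffun 'I_i -> 'I_N}
             | injectiveb p.1 && injectiveb p.2)
          c p * minor (gen_laplacian e) p.1 p.2.

(* Algebraic co-rank: number of critical ideals I_i, 1 <= i <= N, equal
   to <1>  (I_i = <0> for i > N; indices i < 1 are conventions, not counted). *)
Definition algebraic_corank (N : nat) (e : rel 'I_N) : nat :=
  #|[set i : 'I_N.+1 | (0 < (i : nat))%N && propb (critical_ideal_trivial e i)]|.

Definition induced_subgraph (N : nat) (e : rel 'I_N) (T : finType) (f : rel T)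
  : Prop :=
  exists phi : 'I_N -> T, injective phi /\ forall u v, e u v = f (phi u) (phi v).

Definition part3 (m n o : nat) (x : 'I_m + ('I_n + 'I_o)) : nat :=
  match x with inl _ => 0 | inr (inl _) => 1 | inr (inr _) => 2 end%N.

Definition K3 (m n o : nat) : rel ('I_m + ('I_n + 'I_o)) :=
  fun x y => part3 x != part3 y.

Definition TjoinKK (n m o : nat) : rel ('I_n + ('I_m + 'I_o)) :=
  fun x y =>
    match x, y with
    | inl _, inl _ => false
    | inl _, inr _ => true
    | inr _, inl _ => true
    | inr (inl a), inr (inl b) => a != b
    | inr (inr a), inr (inr b) => a != b
    | inr _, inr _ => false
    end.

From HB Require Import structures.
From mathcomp Require Import all_boot all_order all_algebra.
From mathcomp Require Import mpoly.
From mathcomp Require Import ring.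
From Stdlib Require Import ClassicalEpsilon.
Set Implicit Arguments. Unset Strict Implicit. Unset Printing Implicit Defensive.
Import GRing.Theory.
Local Open Scope ring_scope.

(* Modulo 2, and at a suitable 0/1 point, the generalized
   Laplacian of an induced subgraph of K_{m,n,o} or of T_n \/ (K_m + K_o) is a
   product of an N x 2 and a 2 x N matrix, so all its minors of size >= 3 vanish
   there and no critical ideal I_i with i >= 3 is trivial.  Conversely, critical
   ideals of an induced subgraph are contained in those of the whole graph, and
   each of P_4, the cricket, the dart, K_5 minus P_3 and K_{2,2,1,1} has minors
   of sizes 1, 2 and 3 equal to +-1; so a graph with gamma <= 2 contains none
   of them.  For a connected graph avoiding these five graphs, P_4-freeness gives
   diameter <= 2.  If some vertex c misses both ends of an edge ab, the common
   neighbours of a and c form T_n and the remaining vertices split into two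
   cliques around a and around c; otherwise non-adjacency is an equivalence
   relation and K_{2,2,1,1}-freeness leaves at most three parts, or at most one
   part with more than one vertex. *)

(** * Critical ideals and the algebraic co-rank *)

Lemma propbP (P : Prop) : reflect P (propb P).
Proof. by rewrite /propb; case: excluded_middle_informative => H; constructor. Qed.

Lemma critical_ideal_trivial_leq N (e : rel 'I_N) i :
  critical_ideal_trivial e i -> (i <= N)%N.
Proof.
case=> c c1; rewrite leqNgt; apply/negP => Ni.
move/eqP: c1; rewrite big_pred0 ?oner_eq0 // => -[f g] /=.
apply/negbTE/nandP; left; apply/negP => /injectiveP f_inj.
by have := leq_card f f_inj; rewrite !card_ord leqNgt Ni.
Qed.

Lemma algebraic_corank_geq N (e : rel 'I_N) r :
  (forall i, (0 < i <= r)%N -> critical_ideal_trivial e i) ->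
  (r <= algebraic_corank e)%N.
Proof.
case: r => [|r] triv //.
have rN : (r < N)%N := critical_ideal_trivial_leq (triv r.+1 (leqnn r.+1)).
have jN (j : 'I_r.+1) : (j.+1 < N.+1)%N by rewrite ltnS (leq_trans (ltn_ord j)).
have inj : injective (fun j : 'I_r.+1 => inord j.+1 : 'I_N.+1).
  by move=> j j' /(congr1 (@nat_of_ord _)); rewrite !inordK // => /succn_inj /val_inj.
rewrite -[r.+1]card_ord -(card_imset _ inj).
apply/subset_leq_card/subsetP => _ /imsetP[j _ ->].
by rewrite inE inordK //=; apply/propbP/triv; rewrite /= ltn_ord.
Qed.

Lemma algebraic_corank_leq N (e : rel 'I_N) r :
  (forall i, (r < i)%N -> ~ critical_ideal_trivial e i) ->
  (algebraic_corank e <= r)%N.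
Proof.
move=> nontriv; rewrite -[r in (_ <= r)%N]card_ord.
apply: leq_trans (leq_imset_card (fun j : 'I_r => inord j.+1 : 'I_N.+1) 'I_r).
apply/subset_leq_card/subsetP => i; rewrite inE => /andP[i_gt0 /propbP i_triv].
have ir : (i.-1 < r)%N.
  by rewrite prednK // leqNgt; apply/negP => /nontriv.
apply/imsetP; exists (Ordinal ir) => //; apply/val_inj.
by rewrite /= prednK // inordK.
Qed.

Lemma critical_ideal_trivial_of_minor N (e : rel 'I_N) i (f g : {ffun 'I_i -> 'I_N}) :
  injectiveb f -> injectiveb g -> minor (gen_laplacian e) f g ^+ 2 = 1 ->
  critical_ideal_trivial e i.
Proof.
move=> f_inj g_inj minor_sq.
exists [ffun p => if p == (f, g) then minor (gen_laplacian e) f g else 0].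
rewrite (bigD1 (f, g)) /= ?f_inj ?g_inj // ffunE eqxx -expr2 minor_sq big1 ?addr0 //.
by move=> p /andP[_ /negbTE]; rewrite ffunE => ->; rewrite mul0r.
Qed.

Definition mpoly_eval N (S : comNzRingType) (h : 'I_N -> S) : {mpoly int[N]} -> S :=
  mmap (intr : int -> S) h.

HB.instance Definition _ N (S : comNzRingType) (h : 'I_N -> S) :=
  GRing.RMorphism.copy (mpoly_eval h) (mmap (intr : int -> S) h).

Lemma mpoly_eval_laplacian N (e : rel 'I_N) (S : comNzRingType) (h : 'I_N -> S) u v :
  mpoly_eval h (gen_laplacian e u v) = if u == v then h u else - (e u v)%:R.
Proof.
rewrite mxE /mpoly_eval; case: eqP => _.
- by rewrite mmapX mmap1U.
- by rewrite rmorphN rmorph_nat.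
Qed.

Lemma mpoly_eval_minor N (e : rel 'I_N) (S : comNzRingType) (h : 'I_N -> S) i
    (f g : {ffun 'I_i -> 'I_N}) :
  mpoly_eval h (minor (gen_laplacian e) f g) =
  \det (\matrix_(a, b) mpoly_eval h (gen_laplacian e (f a) (g b))).
Proof. by rewrite /minor -det_map_mx; congr (\det _); apply/matrixP => a b; rewrite !mxE. Qed.

Local Notation minor_index N i := ({ffun 'I_i -> 'I_N} * {ffun 'I_i -> 'I_N})%type.

Lemma critical_ideal_trivial_induced k (F : rel 'I_k) N (e : rel 'I_N) i :
  induced_subgraph F e -> critical_ideal_trivial F i -> critical_ideal_trivial e i.
Proof.
move=> [phi [phi_inj phiE]] [c c1].
pose h u : {mpoly int[N]} := 'X_(phi u).
pose lift (p : minor_index k i) : minor_index N i :=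
  ([ffun a => phi (p.1 a)], [ffun a => phi (p.2 a)]).
have h_minor f g : mpoly_eval h (minor (gen_laplacian F) f g) =
    minor (gen_laplacian e) (lift (f, g)).1 (lift (f, g)).2.
  rewrite mpoly_eval_minor /minor; congr (\det _); apply/matrixP => a b.
  rewrite mxE mpoly_eval_laplacian mxE !ffunE mxE.
  by rewrite (inj_eq phi_inj) -phiE.
have lift_inj (p : minor_index k i) : injectiveb p.1 && injectiveb p.2 ->
    injectiveb (lift p).1 && injectiveb (lift p).2.
  case/andP=> /injectiveP p1_inj /injectiveP p2_inj; apply/andP.
  split; apply/injectiveP => a b; rewrite !ffunE => /phi_inj.
  - exact: p1_inj.
  - exact: p2_inj.
exists [ffun q : minor_index N i =>
  \sum_(p : minor_index k i | (injectiveb p.1 && injectiveb p.2) && (lift p == q))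
     mpoly_eval h (c p)].
have := congr1 (mpoly_eval h) c1; rewrite rmorph1 rmorph_sum /= => ->.
transitivity (\sum_(q : minor_index N i | injectiveb q.1 && injectiveb q.2)
   \sum_(p : minor_index k i | (injectiveb p.1 && injectiveb p.2) && (lift p == q))
     mpoly_eval h (c p * minor (gen_laplacian F) p.1 p.2)).
  exact: partition_big.
apply: eq_bigr => q _.
rewrite ffunE mulr_suml; apply: eq_bigr => -[f g] /andP[_ /eqP <-].
by rewrite rmorphM /= h_minor.
Qed.

Lemma det_mulmx_rank_lt (K : fieldType) i r (A : 'M[K]_(i, r)) (B : 'M_(r, i)) :
  (r < i)%N -> \det (A *m B) = 0.
Proof.
move=> ri; apply/eqP; apply: contraTT ri => detAB.
rewrite -leqNgt -{1}(mxrank_unit (A := A *m B)) ?unitmxE ?unitfE //.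
exact: leq_trans (mxrankM_maxl A B) (rank_leq_col A).
Qed.

Lemma critical_ideal_nontrivial_of_factor N (e : rel 'I_N) (K : fieldType)
    (rho : {rmorphism {mpoly int[N]} -> K}) r (A : 'M[K]_(N, r)) (B : 'M[K]_(r, N)) :
  map_mx rho (gen_laplacian e) = A *m B ->
  forall i, (r < i)%N -> ~ critical_ideal_trivial e i.
Proof.
move=> LAB i ri [c c1]; move/eqP: (congr1 rho c1); apply/negP.
rewrite rmorph1 rmorph_sum big1 ?oner_eq0 // => -[f g] _ /=.
rewrite rmorphM /minor -det_map_mx.
have -> : map_mx rho (\matrix_(a, b) gen_laplacian e (f a) (g b)) =
    (\matrix_(a, t) A (f a) t) *m (\matrix_(t, b) B t (g b)).
  apply/matrixP => a b; have := congr1 (fun M : 'M[K]_N => M (f a) (g b)) LAB.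
  by rewrite !mxE => ->; apply: eq_bigr => t _; rewrite !mxE.
by rewrite det_mulmx_rank_lt ?mulr0.
Qed.

Lemma mpoly_eval_laplacian_F2 N (e : rel 'I_N) (h : 'I_N -> 'F_2) u v :
  mpoly_eval h (gen_laplacian e u v) = if u == v then h u else (e u v)%:R.
Proof. by rewrite mpoly_eval_laplacian; case: eqP => // _; case: (e u v); apply/eqP. Qed.

(** * Induced subgraphs of K_{m,n,o} and T_n \/ (K_m + K_o) have co-rank <= 2 *)

(* Over F_2 at x = 0, L(K_{m,n,o}) is the Gram matrix of the form
   x1 y2 + x2 y1 on the vectors (1,0), (0,1), (1,1) attached to the three parts. *)
Lemma K3_corank_le2 N (e : rel 'I_N) m n o :
  induced_subgraph e (@K3 m n o) -> (algebraic_corank e <= 2)%N.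
Proof.
case=> phi [_ phiE]; apply: algebraic_corank_leq.
pose c u := part3 (phi u).
pose A : 'M['F_2]_(N, 2) :=
  \matrix_(u, t) ((if t == 0 :> nat then c u != 1 else c u != 0)%N : nat)%:R.
pose B : 'M['F_2]_(2, N) :=
  \matrix_(t, v) ((if t == 0 :> nat then c v != 0 else c v != 1)%N : nat)%:R.
apply: (@critical_ideal_nontrivial_of_factor _ _ _ (mpoly_eval (fun=> 0)) _ A B).
apply/matrixP => u v; rewrite mxE /= mpoly_eval_laplacian_F2.
rewrite mxE !big_ord_recr big_ord0 /= !mxE /c.
have -> : (if u == v then 0 else (e u v)%:R) = (e u v)%:R :> 'F_2.
  by case: eqP => // ->; rewrite phiE /K3 eqxx.
by rewrite phiE /K3; case: (phi u) => [a|[a|a]]; case: (phi v) => [b|[b|b]]; apply/eqP.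
Qed.

(* Over F_2, with x_u = 1 exactly off T_n, L(T_n \/ (K_m + K_o)) is the Gram
   matrix of the dot product on the vectors (1,1), (1,0), (0,1) attached to
   T_n, K_m and K_o. *)
Lemma TjoinKK_corank_le2 N (e : rel 'I_N) n m o :
  induced_subgraph e (@TjoinKK n m o) -> (algebraic_corank e <= 2)%N.
Proof.
case=> phi [phi_inj phiE]; apply: algebraic_corank_leq.
pose c u : nat := if phi u is inr x then (if x is inl _ then 1 else 2) else 0.
pose A : 'M['F_2]_(N, 2) :=
  \matrix_(u, t) ((if t == 0 :> nat then c u != 2 else c u != 1)%N : nat)%:R.
apply: (@critical_ideal_nontrivial_of_factor _ _ _
          (mpoly_eval (fun u => ((c u != 0)%N : nat)%:R)) _ A A^T).
apply/matrixP => u v; rewrite mxE /= mpoly_eval_laplacian_F2.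
rewrite mxE !big_ord_recr big_ord0 /= !mxE /c.
have [<-|uv] := eqVneq u v; first by case: (phi u) => [a|[a|a]]; apply/eqP.
have : phi u != phi v by rewrite (inj_eq phi_inj).
rewrite phiE /TjoinKK.
by case: (phi u) => [a|[a|a]]; case: (phi v) => [b|[b|b]] //= ab; rewrite ?ab; apply/eqP.
Qed.

(** * Five forbidden induced subgraphs *)

Definition pattern_graph k (P : nat -> nat -> bool) : rel 'I_k := fun u v => P u v.

Definition edges (s : seq (nat * nat)) (x y : nat) : bool :=
  has (fun p => (p.1 == x) && (p.2 == y) || (p.1 == y) && (p.2 == x)) s.

Definition P4 : rel 'I_4 := pattern_graph (edges [:: (0, 1); (1, 2); (2, 3)])%N.

(* The cricket is K_1 \/ (K_2 + T_2) and the dart is K_1 \/ (P_3 + K_1). *)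
Definition cricket : rel 'I_5 :=
  pattern_graph (edges [:: (0, 4); (1, 4); (2, 3); (2, 4); (3, 4)])%N.

Definition dart : rel 'I_5 :=
  pattern_graph (edges [:: (0, 4); (1, 3); (1, 4); (2, 3); (2, 4); (3, 4)])%N.

Definition K5_minus_P3 : rel 'I_5 :=
  pattern_graph (fun x y => (x != y) && ~~ edges [:: (0, 1); (0, 2)] x y)%N.

Definition K2211 : rel 'I_6 :=
  pattern_graph (fun x y => (x != y) && ~~ edges [:: (0, 1); (2, 3)] x y)%N.

Lemma det_mx11_fun (R : comNzRingType) (f : nat -> nat -> R) :
  \det (\matrix_(i < 1, j < 1) f i j) = f 0%N 0%N.
Proof. by rewrite det_mx11 mxE. Qed.

Lemma det_mx22_fun (R : comNzRingType) (f : nat -> nat -> R) :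
  \det (\matrix_(i < 2, j < 2) f i j) = f 0%N 0%N * f 1%N 1%N - f 0%N 1%N * f 1%N 0%N.
Proof.
rewrite (expand_det_row _ 0) !big_ord_recl big_ord0 /cofactor !det_mx11 /=.
rewrite !mxE /= /bump /= !addn0 !add0n !expr0 ?expr1; ring.
Qed.

Lemma det_mx33_fun (R : comNzRingType) (f : nat -> nat -> R) :
  \det (\matrix_(i < 3, j < 3) f i j) =
   f 0%N 0%N * f 1%N 1%N * f 2%N 2%N - f 0%N 0%N * f 1%N 2%N * f 2%N 1%N
 - f 0%N 1%N * f 1%N 0%N * f 2%N 2%N + f 0%N 1%N * f 1%N 2%N * f 2%N 0%N
 + f 0%N 2%N * f 1%N 0%N * f 2%N 1%N - f 0%N 2%N * f 1%N 1%N * f 2%N 0%N.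
Proof.
rewrite (expand_det_row _ 0) !big_ord_recl big_ord0 /cofactor /=.
rewrite !(expand_det_row _ 0) !big_ord_recl big_ord0 /cofactor !det_mx11 /=.
rewrite !mxE /= /bump /= !addn0 !add0n !add1n ?addn1 /= !expr0 ?expr1 ?expr2 !big_ord0.
ring.
Qed.

Lemma pattern_laplacian_inord k P (a b : nat) : (a <= k)%N -> (b <= k)%N ->
  gen_laplacian (@pattern_graph k.+1 P) (inord a) (inord b) =
  if a == b then 'X_(inord a) else - (P a b)%:R.
Proof. by move=> ak bk; rewrite mxE /pattern_graph -val_eqE /= !inordK. Qed.

Lemma critical_ideal_trivial_pattern k P i (r c : seq nat) :
  uniq r -> uniq c -> all (fun a => a <= k)%N (r ++ c) -> size r = i -> size c = i ->
  \det (\matrix_(a < i, b < i)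
          gen_laplacian (@pattern_graph k.+1 P) (inord (nth 0%N r a)) (inord (nth 0%N c b)))
    ^+ 2 = 1 ->
  critical_ideal_trivial (@pattern_graph k.+1 P) i.
Proof.
move=> r_uniq c_uniq; rewrite all_cat => /andP[r_k c_k] r_i c_i minor_sq.
pose rows : {ffun 'I_i -> 'I_k.+1} := [ffun a : 'I_i => inord (nth 0%N r a)].
pose cols : {ffun 'I_i -> 'I_k.+1} := [ffun a : 'I_i => inord (nth 0%N c a)].
have seq_inj s : uniq s -> all (fun a => a <= k)%N s -> size s = i ->
    injectiveb ([ffun a : 'I_i => inord (nth 0%N s a)] : {ffun 'I_i -> 'I_k.+1}).
  move=> s_uniq s_k s_i; apply/injectiveP => a b; rewrite !ffunE => /(congr1 (@nat_of_ord _)).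
  have s_lt x : x \in s -> (x < k.+1)%N by move/(allP s_k).
  rewrite !inordK ?s_lt ?mem_nth ?s_i // => /eqP.
  by rewrite nth_uniq ?s_i // => /eqP /val_inj.
apply: (critical_ideal_trivial_of_minor (f := rows) (g := cols)); try exact: seq_inj.
by rewrite -minor_sq /minor; congr (\det _ ^+ 2); apply/matrixP => a b; rewrite !mxE !ffunE.
Qed.

Local Ltac unit_minor r c :=
  apply: (critical_ideal_trivial_pattern (r := r) (c := c)) => //;
  first
    [ rewrite (det_mx11_fun
        (fun x y => gen_laplacian _ (inord (nth 0%N r x)) (inord (nth 0%N c y))))
    | rewrite (det_mx22_fun
        (fun x y => gen_laplacian _ (inord (nth 0%N r x)) (inord (nth 0%N c y))))
    | rewrite (det_mx33_fun
        (fun x y => gen_laplacian _ (inord (nth 0%N r x)) (inord (nth 0%N c y)))) ];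
  rewrite /= !pattern_laplacian_inord //=; ring.

Lemma P4_critical_ideals i : (0 < i <= 3)%N -> critical_ideal_trivial P4 i.
Proof.
case: i => [|[|[|[|i]]]] // _.
- unit_minor [:: 0]%N [:: 1]%N.
- unit_minor [:: 0; 1]%N [:: 1; 2]%N.
- unit_minor [:: 0; 1; 2]%N [:: 1; 2; 3]%N.
Qed.

Lemma cricket_critical_ideals i : (0 < i <= 3)%N -> critical_ideal_trivial cricket i.
Proof.
case: i => [|[|[|[|i]]]] // _.
- unit_minor [:: 0]%N [:: 4]%N.
- unit_minor [:: 0; 4]%N [:: 4; 1]%N.
- unit_minor [:: 0; 2; 4]%N [:: 4; 3; 1]%N.
Qed.

Lemma dart_critical_ideals i : (0 < i <= 3)%N -> critical_ideal_trivial dart i.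
Proof.
case: i => [|[|[|[|i]]]] // _.
- unit_minor [:: 0]%N [:: 4]%N.
- unit_minor [:: 0; 4]%N [:: 4; 1]%N.
- unit_minor [:: 0; 1; 3]%N [:: 4; 3; 2]%N.
Qed.

Lemma K5_minus_P3_critical_ideals i : (0 < i <= 3)%N -> critical_ideal_trivial K5_minus_P3 i.
Proof.
case: i => [|[|[|[|i]]]] // _.
- unit_minor [:: 0]%N [:: 3]%N.
- unit_minor [:: 0; 3]%N [:: 3; 1]%N.
- unit_minor [:: 0; 1; 3]%N [:: 0; 2; 4]%N.
Qed.

Lemma K2211_critical_ideals i : (0 < i <= 3)%N -> critical_ideal_trivial K2211 i.
Proof.
case: i => [|[|[|[|i]]]] // _.
- unit_minor [:: 0]%N [:: 2]%N.
- unit_minor [:: 0; 2]%N [:: 2; 1]%N.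
- unit_minor [:: 0; 2; 4]%N [:: 1; 3; 5]%N.
Qed.

Lemma no_induced_corank_le2 k (F : rel 'I_k) N (e : rel 'I_N) :
  (forall i, (0 < i <= 3)%N -> critical_ideal_trivial F i) ->
  (algebraic_corank e <= 2)%N -> ~ induced_subgraph F e.
Proof.
move=> F_triv corank_le2 Fe.
have : (3 <= algebraic_corank e)%N.
  by apply: algebraic_corank_geq => i /F_triv; apply: critical_ideal_trivial_induced.
by rewrite leqNgt ltnS corank_le2.
Qed.

Lemma induced_pattern_of_seq k (P : nat -> nat -> bool) N (e : rel 'I_N) (x0 : 'I_N)
    (vs : seq 'I_N) :
  all (fun i => all (fun j =>
         (e (nth x0 vs i) (nth x0 vs j) == P i j) &&
         ((nth x0 vs i == nth x0 vs j) == (i == j))) (iota 0 k)) (iota 0 k) ->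
  induced_subgraph (@pattern_graph k P) e.
Proof.
move=> /allP vsP.
have vsE (u v : 'I_k) : (e (nth x0 vs u) (nth x0 vs v) == P u v) &&
                        ((nth x0 vs u == nth x0 vs v) == (u == v :> nat)).
  move: (vsP u); rewrite mem_iota ltn_ord => /(_ isT) /allP /(_ v).
  by rewrite mem_iota ltn_ord; apply.
exists (fun u => nth x0 vs u); split.
  by move=> u v /eqP; have /andP[_ /eqP ->] := vsE u v => /eqP /val_inj.
by move=> u v; have /andP[/eqP -> _] := vsE u v.
Qed.

(** * Structure of graphs avoiding the forbidden subgraphs *)

Section ForbiddenFreeGraphs.

Variables (N : nat) (e : rel 'I_N).
Hypotheses (e_sym : ssrbool.symmetric e) (e_irr : irreflexive e).

Definition sort3 (P Q : pred 'I_N) (x : 'I_N) : 'I_N + ('I_N + 'I_N) :=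
  if P x then inl x else if Q x then inr (inl x) else inr (inr x).

Lemma sort3_inj P Q : injective (sort3 P Q).
Proof. by move=> x y; rewrite /sort3; do 2!case: (P _); do 2!case: (Q _) => //= -[]. Qed.

Lemma induced_K3_sort3 (P Q : pred 'I_N) :
  (forall u v, P u -> P v -> ~~ e u v) ->
  (forall u v, P u -> ~~ P v -> e u v) ->
  (forall u v, ~~ P u -> ~~ P v -> e u v = (Q u != Q v)) ->
  induced_subgraph e (@K3 N N N).
Proof.
move=> indepP adjP restE; exists (sort3 P Q); split; first exact: sort3_inj.
move=> u v; rewrite /K3 /sort3.
case: (boolP (P u)) => Pu; case: (boolP (P v)) => Pv /=.
- exact/negbTE/indepP.
- by rewrite adjP //; case: (Q v).
- by rewrite e_sym adjP //; case: (Q u).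
- by rewrite restE //; case: (Q u); case: (Q v).
Qed.

Lemma induced_TjoinKK_sort3 (P Q : pred 'I_N) :
  (forall u v, P u -> P v -> ~~ e u v) ->
  (forall u v, P u -> ~~ P v -> e u v) ->
  (forall u v, ~~ P u -> ~~ P v -> u != v -> e u v = (Q u == Q v)) ->
  induced_subgraph e (@TjoinKK N N N).
Proof.
move=> indepP adjP restE; exists (sort3 P Q); split; first exact: sort3_inj.
move=> u v; rewrite /TjoinKK /sort3.
case: (boolP (P u)) => Pu; case: (boolP (P v)) => Pv /=.
- exact/negbTE/indepP.
- by rewrite adjP //; case: (Q v).
- by rewrite e_sym adjP //; case: (Q u).
have [<-|uv] := eqVneq u v; first by rewrite e_irr; case: (Q u) => /=; rewrite eqxx.
by rewrite restE //; case: (Q u); case: (Q v).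
Qed.

Hypothesis P4_free : forall a b c d,
  e a b -> e b c -> e c d -> ~~ e a c -> ~~ e b d -> ~~ e a d -> False.
Hypothesis cricket_free : forall w x y p q,
  e w p -> e w q -> e w x -> e w y -> e x y ->
  ~~ e p q -> ~~ e p x -> ~~ e p y -> ~~ e q x -> ~~ e q y -> p != q -> False.
Hypothesis dart_free : forall w x m y p,
  e w p -> e w x -> e w y -> e w m -> e x m -> e y m ->
  ~~ e x y -> ~~ e p x -> ~~ e p y -> ~~ e p m -> x != y -> False.
Hypothesis K5_minus_P3_free : forall s t x y p,
  e s t -> e s p -> e s x -> e s y -> e t p -> e t x -> e t y -> e x y ->
  ~~ e p x -> ~~ e p y -> False.
Hypothesis K2211_free : forall p q r s u v,
  e p r -> e p s -> e p u -> e p v -> e q r -> e q s -> e q u -> e q v ->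
  e r u -> e r v -> e s u -> e s v -> e u v ->
  ~~ e p q -> ~~ e r s -> p != q -> r != s -> False.

Local Ltac sym := first [done | by rewrite e_sym | by rewrite eq_sym].

(* P_4-freeness makes the ball of radius 2 around u closed under adjacency. *)
Lemma common_neighbour u v : connected_graph e ->
  ~~ e u v -> u != v -> exists2 w, e u w & e w v.
Proof.
move=> conn nuv uv.
pose ball2 : pred 'I_N := fun z => [|| z == u, e u z | [exists w, e u w && e w z]].
have ball2_grow x y : e x y -> ball2 x -> ball2 y.
  move=> exy /or3P[/eqP xu | eux | /existsP[w /andP[euw ewx]]].
  - by rewrite /ball2 -xu exy orbT.
  - by rewrite /ball2; apply/or3P/Or33/existsP; exists x; rewrite eux.
  have [euy|nuy] := boolP (e u y); first by rewrite /ball2 euy orbT.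
  have [ewy|nwy] := boolP (e w y).
    by rewrite /ball2; apply/or3P/Or33/existsP; exists w; rewrite euw.
  have [eux|nux] := boolP (e u x).
    by rewrite /ball2; apply/or3P/Or33/existsP; exists x; rewrite eux.
  by case: (P4_free euw ewx exy nux nwy nuy).
have ball2_closed : closed e ball2.
  by move=> x y exy; apply/idP/idP; apply: ball2_grow; rewrite // e_sym.
have : v \in ball2 by rewrite -(closed_connect ball2_closed (conn u v)) unfold_in /ball2 eqxx.
rewrite unfold_in /ball2 eq_sym (negbTE uv) (negbTE nuv) => /existsP[w /andP[]].
by exists w.
Qed.

Lemma private_neighbours_clique a c w x y :
  e a w -> e w c -> ~~ e a c -> e x a -> ~~ e x c -> e y a -> ~~ e y c ->
  x != y -> e x y.
Proof.
move=> eaw ewc nac exa nxc eya nyc xy; apply/negPn/negP => nxy.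
have ewx : e w x by apply/negPn/negP => nwx; apply: (P4_free exa eaw ewc); sym.
have ewy : e w y by apply/negPn/negP => nwy; apply: (P4_free eya eaw ewc); sym.
by apply: (dart_free ewc ewx ewy _ exa eya nxy); sym.
Qed.

Section NonCotransitiveTriple.

Hypothesis e_connected : connected_graph e.
Variables a b c : 'I_N.
Hypotheses (e_ab : e a b) (n_ac : ~~ e a c) (n_bc : ~~ e b c).

(* [hub], [near_a] and [near_c] become the parts T_n, K_m and K_o. *)
Let hub x := e x a && e x c.
Let near_a x := (x == a) || e x a && ~~ e x c.
Let near_c x := (x == c) || e x c && ~~ e x a.

Let a_neq_c : a != c.
Proof. by apply: contraNneq n_bc => <-; rewrite e_sym. Qed.

Lemma universal_vertex : exists w, [/\ e a w, e w b & e w c].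
Proof.
have [w eaw ewc] := common_neighbour e_connected n_ac a_neq_c.
exists w; split => //; apply/negPn/negP => nwb.
by apply: (P4_free _ eaw ewc _ n_ac n_bc); sym.
Qed.

Lemma dominating_pair x : [|| x == a, x == c, e x a | e x c].
Proof.
apply/negPn/negP; rewrite !negb_or => /and4P[xa xc nxa nxc].
have [w [eaw ewb ewc]] := universal_vertex.
have [exb|nxb] := boolP (e x b).
  have [ewx|nwx] := boolP (e w x).
    by apply: (dart_free ewc _ ewx ewb e_ab exb); sym.
  by apply: (P4_free exb _ ewc _ n_bc nxc); sym.
have [ewx|nwx] := boolP (e w x).
  by apply: (cricket_free ewc ewx _ ewb e_ab); sym.
have [z exz eza] := common_neighbour e_connected nxa xa.
have [ezc|nzc] := boolP (e z c).
  have ezb : e z b by apply/negPn/negP => nzb; apply: (P4_free _ _ ezc _ n_ac n_bc); sym.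
  by apply: (cricket_free (q := x) ezc _ _ ezb e_ab); sym.
have [ezw|nzw] := boolP (e z w).
  by apply: (P4_free exz ezw ewc _ nzc nxc); sym.
by apply: (P4_free exz eza eaw nxa nzw); sym.
Qed.

Lemma nonhub_cases x : ~~ hub x -> near_a x || near_c x.
Proof.
rewrite /hub /near_a /near_c.
case/or4P: (dominating_pair x) => [/eqP-> | /eqP-> | exa | exc]; rewrite ?eqxx ?orbT //.
- by rewrite exa; case: (e x c) => //=; rewrite orbT.
- by rewrite exc andbT; case: (e x a) => //=; rewrite !orbT.
Qed.

Lemma near_a_near_c x : near_a x -> near_c x -> False.
Proof.
have ac := a_neq_c.
rewrite /near_a /near_c => /orP[/eqP-> | /andP[exa nxc]] /orP[/eqP xc | /andP[exc nxa]].
- by rewrite xc eqxx in ac.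
- by move: n_ac; rewrite exc.
- by move: n_ac; rewrite -xc e_sym exa.
- by rewrite exc in nxc.
Qed.

Lemma hub_adj x y : hub x -> ~~ hub y -> e x y.
Proof.
move=> /andP[exa exc] /nonhub_cases.
case/orP=> [/orP[/eqP-> | /andP[eya nyc]] | /orP[/eqP-> | /andP[eyc nya]]] //;
  apply/negPn/negP => nxy.
- by apply: (P4_free eya _ exc _ n_ac nyc); sym.
- by apply: (P4_free eyc _ exa _ _ nya); sym.
Qed.

Lemma hub_indep x y : hub x -> hub y -> ~~ e x y.
Proof.
move=> hx hy; apply/negP => exy.
have nhb : ~~ hub b by rewrite /hub (negbTE n_bc) andbF.
case/andP: (hx) => exa exc; case/andP: (hy) => eya eyc.
by apply: (K5_minus_P3_free exy exc exa (hub_adj hx nhb) eyc eya (hub_adj hy nhb) e_ab); sym.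
Qed.

Lemma near_a_clique x y : near_a x -> near_a y -> x != y -> e x y.
Proof.
have [w [eaw _ ewc]] := universal_vertex.
rewrite /near_a => /orP[/eqP-> | /andP[exa nxc]] /orP[/eqP-> | /andP[eya nyc]];
  rewrite ?eqxx // => xy; first by rewrite e_sym.
exact: (private_neighbours_clique eaw ewc n_ac).
Qed.

Lemma near_c_clique x y : near_c x -> near_c y -> x != y -> e x y.
Proof.
have [w [eaw _ ewc]] := universal_vertex.
have ewa : e w a by rewrite e_sym.
have eca : ~~ e c a by rewrite e_sym.
rewrite /near_c => /orP[/eqP-> | /andP[exc nxa]] /orP[/eqP-> | /andP[eyc nya]];
  rewrite ?eqxx // => xy; first by rewrite e_sym.
by apply: (private_neighbours_clique _ ewa eca); rewrite // e_sym.
Qed.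

Lemma near_a_near_c_nonadj x y : near_a x -> near_c y -> ~~ e x y.
Proof.
rewrite /near_a /near_c => /orP[/eqP-> | /andP[exa nxc]] /orP[/eqP-> | /andP[eyc nya]] //.
- by rewrite e_sym.
- by apply/negP => exy; apply: (P4_free _ exy eyc _ nxc n_ac); sym.
Qed.

Lemma nonhub_adj x y : ~~ hub x -> ~~ hub y -> x != y -> e x y = (near_a x == near_a y).
Proof.
move=> /nonhub_cases hx /nonhub_cases hy xy.
have not_a z : near_c z -> near_a z = false.
  by move=> cz; apply/negP => az; apply: (near_a_near_c az cz).
case/orP: hx => [ax|cx]; case/orP: hy => [ay|cy].
- by rewrite ax ay near_a_clique.
- by rewrite ax not_a //; apply/negbTE/near_a_near_c_nonadj.
- by rewrite ay not_a // e_sym; apply/negbTE/near_a_near_c_nonadj.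
- by rewrite !not_a // near_c_clique.
Qed.

Lemma non_cotransitive_induced : induced_subgraph e (@TjoinKK N N N).
Proof. exact: (induced_TjoinKK_sort3 hub_indep hub_adj nonhub_adj). Qed.

End NonCotransitiveTriple.

Section Cotransitive.

(* Non-adjacency is then an equivalence relation: G is complete multipartite,
   with parts the sets [~~ e _ p]. *)
Hypothesis e_cotrans : forall x y z, e x y -> e x z || e y z.

Lemma cotrans_indep p x y : ~~ e x p -> ~~ e y p -> ~~ e x y.
Proof.
move=> nxp nyp; apply/negP => /(e_cotrans p).
by rewrite (negbTE nxp) (negbTE nyp).
Qed.

Lemma cotrans_adj p x y : ~~ e x p -> e y p -> e x y.
Proof.
by move=> nxp /(e_cotrans x); rewrite [e p x]e_sym (negbTE nxp) orbF e_sym.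
Qed.

Local Ltac adj p r :=
  first [ done | by rewrite e_sym
        | by apply: (cotrans_adj (p := p)); rewrite // e_sym
        | by apply: (cotrans_adj (p := r)); rewrite // e_sym
        | by rewrite e_sym; apply: (cotrans_adj (p := p)); rewrite // e_sym
        | by rewrite e_sym; apply: (cotrans_adj (p := r)); rewrite // e_sym ].

Lemma cotransitive_induced :
  exists m n o, induced_subgraph e (@K3 m n o) \/ induced_subgraph e (@TjoinKK n m o).
Proof.
pose part p : pred 'I_N := fun x => ~~ e x p.
have part_indep p u v : part p u -> part p v -> ~~ e u v := @cotrans_indep p u v.
have part_adj p u v : part p u -> ~~ part p v -> e u v.
  by move=> pu /negPn; apply: cotrans_adj.
exists N, N, N.
have [/existsP[p /existsP[q /existsP[r /existsP[s /and5P[pq npq rs nrs epr]]]]] | no_two] :=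
  boolP [exists p, exists q, exists r, exists s,
           [&& p != q, ~~ e p q, r != s, ~~ e r s & e p r]].
  left; apply: (induced_K3_sort3 (P := part p) (Q := part r) (part_indep p) (part_adj p)).
  move=> u v /negPn eup /negPn evp.
  case: (boolP (part r u)) => ru; case: (boolP (part r v)) => rv /=.
  - exact/negbTE/(part_indep r).
  - exact: (part_adj r).
  - by rewrite e_sym; apply: (part_adj r).
  (* Two parts with two vertices each leave room for only one more part. *)
  apply/negbTE/negP => euv; move: ru rv => /negPn eur /negPn evr.
  have esp : e s p by apply: (cotrans_adj (p := r)); rewrite // e_sym.
  by apply: (K2211_free (p := p) (q := q) (r := r) (s := s) (u := u) (v := v)); adj p r.
right; have [/existsP[p /existsP[q /andP[pq npq]]] | complete] :=
  boolP [exists p, exists q, (p != q) && ~~ e p q].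
  apply: (induced_TjoinKK_sort3 (P := part p) (Q := predT) (part_indep p) (part_adj p)).
  move=> u v /negPn eup /negPn evp uv /=; apply/negPn/negP => nuv.
  move/existsPn: no_two => /(_ p) /existsPn /(_ q) /existsPn /(_ u) /existsPn /(_ v).
  by rewrite pq npq uv nuv e_sym eup.
apply: (induced_TjoinKK_sort3 (P := pred0) (Q := predT)) => // u v _ _ uv /=.
by apply/negPn/negP => nuv; move/existsPn: complete => /(_ u) /existsPn /(_ v); rewrite uv nuv.
Qed.

End Cotransitive.

Lemma forbidden_free_structure : connected_graph e ->
  exists m n o, induced_subgraph e (@K3 m n o) \/ induced_subgraph e (@TjoinKK n m o).
Proof.
move=> conn.
have [/existsP[a /existsP[b /existsP[c /and3P[eab nac nbc]]]] | cotrans] :=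
  boolP [exists a, exists b, exists c, [&& e a b, ~~ e a c & ~~ e b c]].
  by exists N, N, N; right; apply: (non_cotransitive_induced conn eab nac nbc).
apply: cotransitive_induced => x y z exy.
move/existsPn: cotrans => /(_ x) /existsPn /(_ y) /existsPn /(_ z).
by rewrite exy /= negb_and !negbK.
Qed.

End ForbiddenFreeGraphs.

Section CorankAtMostTwo.

Variables (N : nat) (e : rel 'I_N).
Hypotheses (e_sym : ssrbool.symmetric e) (e_irr : irreflexive e).
Hypothesis corank_le2 : (algebraic_corank e <= 2)%N.

Local Ltac contra :=
  match goal with
  | H : is_true (e ?x ?x) |- _ => by rewrite e_irr in H
  | H1 : is_true (e ?x ?y), H2 : is_true (~~ e ?x ?y) |- _ => by rewrite H1 in H2
  | H1 : is_true (e ?x ?y), H2 : is_true (~~ e ?y ?x) |- _ => by rewrite e_sym H1 in H2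
  end.

Local Ltac check_copy :=
  rewrite /= ?eqb_id ?eqbF_neg ?eqxx ?e_irr; repeat (apply/andP; split);
  first [ done | by rewrite e_sym | by rewrite eq_sym | apply/eqP => E; subst; contra ].

Lemma no_induced_P4 a b c d :
  e a b -> e b c -> e c d -> ~~ e a c -> ~~ e b d -> ~~ e a d -> False.
Proof.
move=> *; apply: (no_induced_corank_le2 P4_critical_ideals corank_le2).
by apply: (induced_pattern_of_seq (x0 := a) (vs := [:: a; b; c; d])); check_copy.
Qed.

Lemma no_induced_cricket w x y p q :
  e w p -> e w q -> e w x -> e w y -> e x y ->
  ~~ e p q -> ~~ e p x -> ~~ e p y -> ~~ e q x -> ~~ e q y -> p != q -> False.
Proof.
move=> *; apply: (no_induced_corank_le2 cricket_critical_ideals corank_le2).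
by apply: (induced_pattern_of_seq (x0 := p) (vs := [:: p; q; x; y; w])); check_copy.
Qed.

Lemma no_induced_dart w x m y p :
  e w p -> e w x -> e w y -> e w m -> e x m -> e y m ->
  ~~ e x y -> ~~ e p x -> ~~ e p y -> ~~ e p m -> x != y -> False.
Proof.
move=> *; apply: (no_induced_corank_le2 dart_critical_ideals corank_le2).
by apply: (induced_pattern_of_seq (x0 := p) (vs := [:: p; x; y; m; w])); check_copy.
Qed.

Lemma no_induced_K5_minus_P3 s t x y p :
  e s t -> e s p -> e s x -> e s y -> e t p -> e t x -> e t y -> e x y ->
  ~~ e p x -> ~~ e p y -> False.
Proof.
move=> *; apply: (no_induced_corank_le2 K5_minus_P3_critical_ideals corank_le2).
by apply: (induced_pattern_of_seq (x0 := p) (vs := [:: p; x; y; s; t])); check_copy.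
Qed.

Lemma no_induced_K2211 p q r s u v :
  e p r -> e p s -> e p u -> e p v -> e q r -> e q s -> e q u -> e q v ->
  e r u -> e r v -> e s u -> e s v -> e u v ->
  ~~ e p q -> ~~ e r s -> p != q -> r != s -> False.
Proof.
move=> *; apply: (no_induced_corank_le2 K2211_critical_ideals corank_le2).
by apply: (induced_pattern_of_seq (x0 := p) (vs := [:: p; q; r; s; u; v])); check_copy.
Qed.

End CorankAtMostTwo.

Theorem theorem4p2 (N : nat) (e : rel 'I_N) :
  simple_graph e -> connected_graph e ->
  ((algebraic_corank e <= 2)%N <->
   exists m n o : nat,
     induced_subgraph e (@K3 m n o) \/ induced_subgraph e (@TjoinKK n m o)).
Proof.
move=> [e_sym e_irr] e_conn; split; last first.
  by case=> m [n [o [/K3_corank_le2 | /TjoinKK_corank_le2]]].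
move=> corank_le2; apply: (forbidden_free_structure e_sym e_irr) e_conn.
- exact: no_induced_P4.
- exact: no_induced_cricket.
- exact: no_induced_dart.
- exact: no_induced_K5_minus_P3.
- exact: no_induced_K2211.
Qed.
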